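(* Let $c>0$ and $A(r)=\frac{1}{1+s/2}r^{1+s/2}$. Then: (i) $d_{\rm DW}(x,\mathbf{x})\ge A(|x-\mathbf{x}|)$ for $x_1\ge0$, and $d_{\rm DW}(x,-\mathbf{x})\ge A(|x+\mathbf{x}|)$ for $x_1\le0$; (ii) $d_{\rm DW}((x_1,0,\dots,0),\mathbf{x})\ge A(|x_1-\tfrac L2|)$ for $x_1\ge0$ and $\ge 2A(\tfrac L2)-A(|\tfrac L2+x_1|)$ for $-\tfrac L2+c\le x_1\le0$; and $d_{\rm DW}((x_1,0,\dots,0),-\mathbf{x})\ge A(|x_1+\tfrac L2|)$ for $x_1\le0$ and $\ge2A(\tfrac L2)-A(|\tfrac L2-x_1|)$ for $0\le x_1\le\tfrac L2-c$; (iii) $d_{\rm DW}((x_1,\dots,x_d),\mathbf{x})\ge2A(\tfrac L2)-A(|\tfrac L2+x_1|)$ for $-\tfrac L2+c\le x_1\le0$, and $d_{\rm DW}((x_1,\dots,x_d),-\mathbf{x})\ge2A(\tfrac L2)-A(|\tfrac L2-x_1|)$ for $0\le x_1\le\tfrac L2-c$.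
   Context: Let $d\ge1$, $s\ge2$, $L>0$, $\mathbf{x}=(L/2,0,\dots,0)\in\mathbb{R}^d$, $V_{\rm DW}(x)=\min\{|x+\mathbf{x}|^s,|x-\mathbf{x}|^s\}$. The double-well Agmon distance is $d_{\rm DW}(x,y)=\inf\{\int_0^1\sqrt{V_{\rm DW}(\gamma(t))}|\gamma'(t)|dt:\gamma\text{ piecewise }C^1,\ \gamma(0)=x,\ \gamma(1)=y\}$. *)

From Stdlib Require Import Reals Lra.
From Coquelicot Require Import Coquelicot.
Open Scope R_scope.

(* Points of R^d are represented by functions nat -> R; only the
   coordinates 0 .. d-1 are meaningful (coordinate 0 is x_1). *)
Definition pt := nat -> R.

Fixpoint sumsq (d : nat) (v : pt) : R :=
  match d with O => 0 | S k => sumsq k v + (v k) ^ 2 end.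

Definition enorm (d : nat) (v : pt) : R := sqrt (sumsq d v).

Definition padd (u v : pt) : pt := fun i => u i + v i.
Definition psub (u v : pt) : pt := fun i => u i - v i.
Definition popp (u : pt) : pt := fun i => - u i.

Definition rpow (r p : R) : R :=
  if Rlt_dec 0 r then Rpower r p else 0.

Definition xw (L : R) : pt := fun i => if Nat.eqb i 0 then L / 2 else 0.

Definition e1 (x1 : R) : pt := fun i => if Nat.eqb i 0 then x1 else 0.

Definition VDW (d : nat) (s L : R) (x : pt) : R :=
  Rmin (rpow (enorm d (padd x (xw L))) s) (rpow (enorm d (psub x (xw L))) s).

Definition Afun (s r : R) : R := rpow r (1 + s / 2) / (1 + s / 2).

Definition cont_on (a b : R) (f : R -> R) : Prop :=
  forall u, a <= u <= b ->
    filterlim f (within (fun v => a <= v <= b) (locally u)) (locally (f u)).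

Fixpoint psum (n : nat) (f : nat -> R) : R :=
  match n with O => 0 | S m => psum m f + f m end.

(* gamma : [0,1] -> R^d is a piecewise C^1 path from x to y, with partition
   0 = t 0 < t 1 < ... < t n = 1, and Dg k the derivative of gamma on the
   k-th piece (t k, t (k+1)), extended continuously to [t k, t (k+1)]. *)
Definition pw_C1_path (d : nat) (x y : pt) (g : R -> pt)
    (Dg : nat -> R -> pt) (t : nat -> R) (n : nat) : Prop :=
  (forall i, (i < d)%nat -> g 0 i = x i /\ g 1 i = y i) /\
  t O = 0 /\ t n = 1 /\
  (forall k, (k < n)%nat -> t k < t (S k)) /\
  (forall i, (i < d)%nat -> cont_on 0 1 (fun u => g u i)) /\
  (forall k i, (k < n)%nat -> (i < d)%nat ->
     cont_on (t k) (t (S k)) (fun u => Dg k u i) /\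
     forall u, t k < u < t (S k) -> is_derive (fun v => g v i) u (Dg k u i)).

Definition agmon_length (d : nat) (s L : R) (g : R -> pt)
    (Dg : nat -> R -> pt) (t : nat -> R) (n : nat) : R :=
  psum n (fun k => RInt (fun u => sqrt (VDW d s L (g u)) * enorm d (Dg k u))
                        (t k) (t (S k))).

Definition dDW (d : nat) (s L : R) (x y : pt) : Rbar :=
  Glb_Rbar (fun l => exists g Dg t n,
     pw_C1_path d x y g Dg t n /\ l = agmon_length d s L g Dg t n).

(* Call Phi Agmon-Lipschitz if |Phi z - Phi y| <= (sqrt V(y) + eps) |z - y| for z near y.
   Along a C^1 piece g the right Dini derivative of Phi o g is then at most sqrt V(g) |g'|, so a
   comparison argument (real induction) gives Phi y - Phi x <= d_DW(x, y).  As A'(r) = r^(s/2),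
   -A(rho), with rho the distance to the nearer well, is Agmon-Lipschitz: this gives (i) and half
   of (ii).  For the rest take, for the well w = sg * bold-x (sg = +-1),
     Theta(y) = A(min(|sg y_1 + L/2|, L/2)) + max(0, A(L/2) - A(|y - w|)):
   each term is Agmon-Lipschitz on one side of the hyperplane sg y_1 = 0 and constant on the
   other, and Theta(w) - Theta(x) = 2 A(L/2) - A(|L/2 + sg x_1|) whenever -L/2 <= sg x_1 <= 0. *)

From Stdlib Require Import Reals Lra Lia Classical.
From Coquelicot Require Import Coquelicot.
Open Scope R_scope.

Lemma locally_R x (P : R -> Prop) :
  @locally R_UniformSpace x P <-> exists del : posreal, forall y, Rabs (y - x) < del -> P y.
Proof. reflexivity. Qed.

Lemma continuous_R f x :
  continuous f x <-> forall eps : posreal, locally x (fun y : R => Rabs (f y - f x) < eps).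
Proof.
  split; intros H; [apply continuity_pt_locally, continuity_pt_filterlim
                   | apply continuity_pt_filterlim, continuity_pt_locally]; exact H.
Qed.

Lemma is_derive_approx (f : R -> R) a l : is_derive f a l -> forall eps : posreal,
  locally a (fun b : R => Rabs (f b - f a - (b - a) * l) <= eps * Rabs (b - a)).
Proof.
  intros [_ Hf] eps. specialize (Hf a (fun P HP => HP) eps).
  unfold norm, minus, plus, opp, scal in Hf; simpl in Hf.
  exact Hf.
Qed.

Lemma Rmin_lipschitz a b a' b' e :
  Rabs (a - a') <= e -> Rabs (b - b') <= e -> Rabs (Rmin a b - Rmin a' b') <= e.
Proof.
  intros H1 H2. apply Rabs_le_between in H1. apply Rabs_le_between in H2.
  apply Rabs_le_between. unfold Rmin. destruct (Rle_dec a b); destruct (Rle_dec a' b'); lra.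
Qed.

Lemma filter_forall_lt {T : Type} {F : (T -> Prop) -> Prop} {FF : Filter F}
  d (P : nat -> T -> Prop) :
  (forall i, (i < d)%nat -> F (P i)) -> F (fun t => forall i, (i < d)%nat -> P i t).
Proof.
  induction d as [|d IH]; intros HP.
  - apply filter_forall. intros; lia.
  - apply (filter_imp (fun t => (forall i, (i < d)%nat -> P i t) /\ P d t)).
    + intros t [Ht Hd] i Hi. destruct (Nat.eq_dec i d) as [->|]; [exact Hd | apply Ht; lia].
    + apply filter_and; [apply IH; intros; apply HP; lia | apply HP; lia].
Qed.

Definition clamp a b u := Rmax a (Rmin b u).

Lemma clamp_in a b u : a <= b -> a <= clamp a b u <= b.
Proof. intros. unfold clamp, Rmax, Rmin. destruct (Rle_dec b u); destruct (Rle_dec a _); lra. Qed.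

Lemma clamp_id a b u : a <= u <= b -> clamp a b u = u.
Proof. intros. unfold clamp, Rmax, Rmin. destruct (Rle_dec b u); destruct (Rle_dec a _); lra. Qed.

Lemma clamp_lipschitz a b u v : a <= b -> Rabs (clamp a b v - clamp a b u) <= Rabs (v - u).
Proof.
  intros Hab. apply Rabs_le_between.
  pose proof (proj1 (Rabs_le_between (v - u) _) (Rle_refl _)). unfold clamp, Rmax, Rmin.
  destruct (Rle_dec b u); destruct (Rle_dec b v);
  repeat match goal with |- context [Rle_dec ?x ?y] => destruct (Rle_dec x y) end; lra.
Qed.

Lemma continuous_clamp_comp a b f x : a <= b -> cont_on a b f ->
  continuous (fun u => f (clamp a b u)) x.
Proof.
  intros Hab Hf.
  apply (filterlim_comp _ _ _ (clamp a b) f _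
           (within (fun v => a <= v <= b) (locally (clamp a b x)))).
  - intros P [del HP]. apply locally_R. exists del. intros u Hu.
    apply HP; [|apply clamp_in, Hab].
    change (Rabs (clamp a b u - clamp a b x) < del).
    eapply Rle_lt_trans; [apply clamp_lipschitz|]; assumption.
  - apply Hf, clamp_in, Hab.
Qed.

Lemma cont_on_sub a b a' b' f : a <= a' -> b' <= b -> cont_on a b f -> cont_on a' b' f.
Proof.
  intros Ha Hb Hf u Hu. eapply filterlim_filter_le_1; [|apply Hf; lra].
  intros P HP. unfold within in *. eapply filter_imp; [|exact HP]. intros v Hv Hv'. apply Hv. lra.
Qed.

Lemma real_induction (S : R -> Prop) a b : a <= b -> S a ->
  (forall x, a <= x < b -> S x -> exists del, 0 < del /\ forall y, x < y < x + del -> S y) ->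
  (forall x, a < x <= b -> (forall y, a <= y < x -> S y) -> S x) ->
  S b.
Proof.
  intros Hab Ha Hstep Hclosed.
  set (E := fun w => a <= w <= b /\ forall y, a <= y <= w -> S y).
  destruct (completeness E) as [m [Hub Hlub]].
  { exists b. intros w [Hw _]. lra. }
  { exists a. split; [lra|]. intros y Hy. replace y with a by lra. exact Ha. }
  assert (Ham : a <= m).
  { apply Hub. split; [lra|]. intros y Hy. replace y with a by lra. exact Ha. }
  assert (Hmb : m <= b) by (apply Hlub; intros w [Hw _]; lra).
  assert (Hbelow : forall y, a <= y < m -> S y).
  { intros y Hy. destruct (classic (exists w, E w /\ y < w)) as [[w [[_ Hw] Hyw]]|Hn].
    - apply Hw. lra.
    - exfalso. assert (m <= y); [|lra]. apply Hlub. intros w Ew.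
      apply Rnot_lt_le. intros Hyw. apply Hn. exists w. split; assumption. }
  assert (Em : E m).
  { split; [lra|]. intros y Hy. destruct (Req_dec y m) as [->|Hne]; [|apply Hbelow; lra].
    destruct (Req_dec m a) as [->|Hma]; [exact Ha|]. apply Hclosed; [lra | exact Hbelow]. }
  destruct (Req_dec m b) as [<-|Hmb']; [apply Em; lra|].
  exfalso. destruct (Hstep m ltac:(lra) (proj2 Em m ltac:(lra))) as [del [Hdel Hright]].
  pose proof (Rmin_l (m + del / 2) b). pose proof (Rmin_r (m + del / 2) b).
  set (w := Rmin (m + del / 2) b) in *.
  assert (m < w) by (apply Rmin_glb_lt; lra).
  assert (E w); [|pose proof (Hub w ltac:(assumption)); lra].
  split; [lra|]. intros y Hy. destruct (Rle_dec y m); [apply Em; lra | apply Hright; lra].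
Qed.

Lemma right_nonincreasing_le (H : R -> R) a b : a <= b ->
  (forall x, a <= x <= b -> continuous H x) ->
  (forall x, a < x < b -> exists del, 0 < del /\ forall y, x < y < x + del -> H y <= H x) ->
  H b <= H a.
Proof.
  intros Hab Hcont Hright. apply Rle_plus_epsilon. intros eta Heta.
  apply (real_induction (fun w => H w <= H a + eta) a b Hab); [lra| |].
  - intros x Hx Hxa. destruct (Req_dec x a) as [->|Hne].
    + destruct (proj1 (locally_R _ _)
        (proj1 (continuous_R _ _) (Hcont a ltac:(lra)) (mkposreal eta Heta))) as [del Hdel].
      exists del. split; [apply cond_pos|]. intros y Hy.
      specialize (Hdel y ltac:(rewrite Rabs_pos_eq; lra)).
      apply Rabs_lt_between in Hdel. simpl in Hdel. lra.
    + destruct (Hright x ltac:(lra)) as [del [Hdel Hy]].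
      exists del. split; [exact Hdel|]. intros y Hxy. specialize (Hy y Hxy). lra.
  - intros x Hx Hleft. apply Rnot_lt_le. intros Hlt.
    assert (Hgap : 0 < H x - (H a + eta)) by lra.
    destruct (proj1 (locally_R _ _)
      (proj1 (continuous_R _ _) (Hcont x ltac:(lra)) (mkposreal _ Hgap))) as [del Hdel].
    pose proof (Rmax_l a (x - del / 2)). pose proof (Rmax_r a (x - del / 2)).
    pose proof (cond_pos del).
    assert (Rmax a (x - del / 2) < x) by (apply Rmax_lub_lt; lra).
    set (y := Rmax a (x - del / 2)) in *.
    assert (Rabs (y - x) < del) by (apply Rabs_lt_between; lra).
    specialize (Hdel y ltac:(assumption)). specialize (Hleft y ltac:(lra)).
    apply Rabs_lt_between in Hdel. simpl in Hdel. lra.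
Qed.

Lemma dini_comparison (P F : R -> R) a b : a <= b ->
  (forall x, a <= x <= b -> continuous P x) -> (forall x, a <= x <= b -> continuous F x) ->
  (forall x, a < x < b -> forall eps, 0 < eps -> exists del, 0 < del /\
     forall y, x < y < x + del -> P y - P x <= F y - F x + eps * (y - x)) ->
  P b - P a <= F b - F a.
Proof.
  intros Hab HP HF Hright. apply Rle_plus_epsilon. intros eta Heta.
  set (eps := eta / (b - a + 1)).
  assert (Heps : 0 < eps) by (apply Rdiv_lt_0_compat; lra).
  assert (K : P b - F b - eps * b <= P a - F a - eps * a).
  { apply (right_nonincreasing_le (fun y => P y - F y - eps * y)); [exact Hab| |].
    - intros x Hx. apply (continuous_minus (fun y => P y - F y) (fun y => eps * y));
        [apply (continuous_minus P F); auto | apply (continuous_mult (fun _ => eps) (fun y => y));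
         [apply continuous_const | apply continuous_id]].
    - intros x Hx. destruct (Hright x Hx eps Heps) as [del [Hdel Hy]].
      exists del. split; [exact Hdel|]. intros y Hxy. specialize (Hy y Hxy). lra. }
  assert (eps * (b - a) <= eta); [|lra].
  apply Rle_trans with (eps * (b - a + 1)); [nra | right; unfold eps; field; lra].
Qed.

(** * The Euclidean norm on the first [d] coordinates *)

Lemma sumsq_ge0 d v : 0 <= sumsq d v.
Proof. induction d; simpl; nra. Qed.

Lemma sumsq_ext d u v : (forall i, (i < d)%nat -> u i = v i) -> sumsq d u = sumsq d v.
Proof.
  induction d as [|d IH]; intros Huv; simpl; [reflexivity|].
  rewrite IH by (intros; apply Huv; lia). rewrite Huv by lia. reflexivity.
Qed.

Lemma enorm_ext d u v : (forall i, (i < d)%nat -> u i = v i) -> enorm d u = enorm d v.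
Proof. intros Huv. unfold enorm. rewrite (sumsq_ext d u v Huv). reflexivity. Qed.

Lemma enorm_ge0 d v : 0 <= enorm d v.
Proof. apply sqrt_pos. Qed.

Lemma enorm_zero d v : (forall i, (i < d)%nat -> v i = 0) -> enorm d v = 0.
Proof.
  intros Hv. unfold enorm. rewrite <- sqrt_0. f_equal.
  induction d as [|d IH]; simpl; [reflexivity|].
  rewrite IH by (intros; apply Hv; lia). rewrite Hv by lia. ring.
Qed.

Lemma Rabs_le_enorm d v i : (i < d)%nat -> Rabs (v i) <= enorm d v.
Proof.
  intros Hi. unfold enorm. rewrite <- sqrt_Rsqr_abs. apply sqrt_le_1_alt. unfold Rsqr.
  induction d as [|d IH]; simpl; [lia|].
  destruct (Nat.eq_dec i d) as [->|Hne].
  - pose proof (sumsq_ge0 d v). lra.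
  - specialize (IH ltac:(lia)). nra.
Qed.

Lemma enorm_first_coord d v : (1 <= d)%nat -> (forall i, (0 < i)%nat -> v i = 0) ->
  enorm d v = Rabs (v 0%nat).
Proof.
  intros Hd Hv. unfold enorm. rewrite <- sqrt_Rsqr_abs. f_equal. unfold Rsqr.
  induction d as [|d IH]; [lia|]. simpl.
  destruct d as [|d]; simpl; [ring|].
  rewrite (Hv (S d)) by lia. simpl in IH. rewrite IH by lia. ring.
Qed.

Lemma enorm_S_le d v : enorm (S d) v <= enorm d v + Rabs (v d).
Proof.
  unfold enorm; cbn [sumsq]. pose proof (sumsq_ge0 d v) as Hs.
  pose proof (sqrt_pos (sumsq d v)). pose proof (Rabs_pos (v d)).
  rewrite <- (sqrt_pow2 (sqrt (sumsq d v) + Rabs (v d))) by lra.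
  apply sqrt_le_1_alt.
  rewrite <- (pow2_abs (v d)). pose proof (pow2_sqrt _ Hs). nra.
Qed.

Lemma enorm_le_coord_bound d v M : (forall i, (i < d)%nat -> Rabs (v i) <= M) ->
  enorm d v <= INR d * M.
Proof.
  induction d as [|d IH]; intros Hv.
  - unfold enorm; simpl. rewrite sqrt_0. lra.
  - rewrite S_INR. eapply Rle_trans; [apply enorm_S_le|].
    specialize (IH ltac:(intros; apply Hv; lia)). specialize (Hv d ltac:(lia)). lra.
Qed.

Lemma minkowski2 x1 y1 x2 y2 :
  sqrt ((x1 + x2)^2 + (y1 + y2)^2) <= sqrt (x1^2 + y1^2) + sqrt (x2^2 + y2^2).
Proof.
  assert (A1 : 0 <= x1^2 + y1^2) by nra. assert (A2 : 0 <= x2^2 + y2^2) by nra.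
  pose proof (sqrt_pos (x1^2 + y1^2)). pose proof (sqrt_pos (x2^2 + y2^2)).
  assert (CS : x1 * x2 + y1 * y2 <= sqrt (x1^2 + y1^2) * sqrt (x2^2 + y2^2)).
  { rewrite <- sqrt_mult_alt by exact A1.
    destruct (Rle_dec (x1 * x2 + y1 * y2) 0) as [Hn|Hp].
    - pose proof (sqrt_pos ((x1^2 + y1^2) * (x2^2 + y2^2))). lra.
    - rewrite <- (sqrt_pow2 (x1 * x2 + y1 * y2)) by lra. apply sqrt_le_1_alt.
      pose proof (pow2_ge_0 (x1 * y2 - x2 * y1)). nra. }
  rewrite <- (sqrt_pow2 (sqrt (x1^2 + y1^2) + sqrt (x2^2 + y2^2))) by lra.
  apply sqrt_le_1_alt.
  pose proof (pow2_sqrt _ A1). pose proof (pow2_sqrt _ A2). nra.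
Qed.

Lemma enorm_triangle d u v : enorm d (padd u v) <= enorm d u + enorm d v.
Proof.
  induction d as [|d IH]; [unfold enorm; simpl; rewrite sqrt_0; lra|].
  unfold enorm in *; simpl. unfold padd at 2.
  pose proof (sumsq_ge0 d u) as Hu. pose proof (sumsq_ge0 d v) as Hv.
  pose proof (sqrt_pos (sumsq d (padd u v))).
  eapply Rle_trans;
    [|pose proof (minkowski2 (sqrt (sumsq d u)) (u d) (sqrt (sumsq d v)) (v d)) as M;
      rewrite !pow2_sqrt in M by assumption; exact M].
  apply sqrt_le_1_alt. apply Rplus_le_compat_r.
  rewrite <- (pow2_sqrt (sumsq d (padd u v))) by apply sumsq_ge0.
  apply pow_incr. lra.
Qed.

Lemma enorm_scal d h v : enorm d (fun i => h * v i) = Rabs h * enorm d v.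
Proof.
  unfold enorm. rewrite <- sqrt_Rsqr_abs, <- sqrt_mult_alt by apply Rle_0_sqr.
  f_equal. unfold Rsqr. induction d as [|d IH]; simpl; [ring|]. rewrite IH. ring.
Qed.

Lemma enorm_psub_comm d u v : enorm d (psub u v) = enorm d (psub v u).
Proof.
  unfold enorm. f_equal. induction d as [|d IH]; cbn [sumsq]; [reflexivity|].
  rewrite IH. unfold psub. ring.
Qed.

Lemma Rabs_enorm_sub_le d u v : Rabs (enorm d u - enorm d v) <= enorm d (psub u v).
Proof.
  assert (T : forall a b, enorm d a <= enorm d (psub a b) + enorm d b).
  { intros a b. rewrite <- (enorm_ext d (padd (psub a b) b) a) by (intros; unfold padd, psub; ring).
    apply enorm_triangle. }
  pose proof (T u v). pose proof (T v u) as Tvu. rewrite enorm_psub_comm in Tvu.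
  apply Rabs_le; lra.
Qed.

Lemma Rabs_enorm_psub_le d w y z :
  Rabs (enorm d (psub z w) - enorm d (psub y w)) <= enorm d (psub z y).
Proof.
  eapply Rle_trans; [apply Rabs_enorm_sub_le|].
  right. apply enorm_ext. intros. unfold psub. ring.
Qed.

Lemma locally_enorm_psub_lt d (G : R -> pt) x e : 0 < e ->
  (forall i, (i < d)%nat -> continuous (fun u => G u i) x) ->
  locally x (fun y : R => enorm d (psub (G y) (G x)) < e).
Proof.
  intros He HG. pose proof (pos_INR d).
  assert (He' : 0 < e / (INR d + 1)) by (apply Rdiv_lt_0_compat; lra).
  apply (filter_imp (fun y => forall i, (i < d)%nat -> Rabs (G y i - G x i) < e / (INR d + 1))).
  - intros y Hy. eapply Rle_lt_trans.
    + apply enorm_le_coord_bound with (M := e / (INR d + 1)). intros i Hi. left. apply Hy, Hi.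
    + apply Rlt_le_trans with ((INR d + 1) * (e / (INR d + 1))); [nra | right; field; lra].
  - apply filter_forall_lt. intros i Hi.
    exact (proj1 (continuous_R _ _) (HG i Hi) (mkposreal _ He')).
Qed.

Lemma enorm_increment_le d (G : R -> pt) (Dx : pt) x e : 0 < e ->
  (forall i, (i < d)%nat -> is_derive (fun u => G u i) x (Dx i)) ->
  locally x (fun y : R => enorm d (psub (G y) (G x)) <= (enorm d Dx + e) * Rabs (y - x)).
Proof.
  intros He HG. pose proof (pos_INR d).
  assert (He' : 0 < e / (INR d + 1)) by (apply Rdiv_lt_0_compat; lra).
  apply (filter_imp (fun y => forall i, (i < d)%nat ->
           Rabs (G y i - G x i - (y - x) * Dx i) <= e / (INR d + 1) * Rabs (y - x))).
  - intros y Hy.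
    rewrite (enorm_ext d (psub (G y) (G x))
               (padd (fun i => (y - x) * Dx i) (fun i => G y i - G x i - (y - x) * Dx i)))
      by (intros; unfold padd, psub; ring).
    eapply Rle_trans; [apply enorm_triangle|]. rewrite enorm_scal.
    pose proof (enorm_le_coord_bound d _ _ Hy). pose proof (Rabs_pos (y - x)).
    assert (INR d * (e / (INR d + 1)) <= e)
      by (apply Rle_trans with ((INR d + 1) * (e / (INR d + 1))); [nra | right; field; lra]).
    nra.
  - apply filter_forall_lt. intros i Hi. exact (is_derive_approx _ _ _ (HG i Hi) (mkposreal _ He')).
Qed.

Lemma continuous_comp_pt d (Psi : pt -> R) (G : R -> pt) x C r : 0 < r ->
  (forall i, (i < d)%nat -> continuous (fun u => G u i) x) ->
  (forall z, enorm d (psub z (G x)) < r ->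
     Rabs (Psi z - Psi (G x)) <= C * enorm d (psub z (G x))) ->
  continuous (fun u => Psi (G u)) x.
Proof.
  intros Hr HG HPsi. apply continuous_R. intros eps.
  pose proof (Rabs_pos C). pose proof (cond_pos eps).
  assert (He : 0 < Rmin r (eps / (Rabs C + 1)))
    by (apply Rmin_pos; [exact Hr | apply Rdiv_lt_0_compat; lra]).
  eapply filter_imp; [|exact (locally_enorm_psub_lt d G x _ He HG)]. intros y Hy. simpl in Hy.
  pose proof (Rmin_l r (eps / (Rabs C + 1))). pose proof (Rmin_r r (eps / (Rabs C + 1))).
  pose proof (enorm_ge0 d (psub (G y) (G x))).
  eapply Rle_lt_trans; [apply HPsi; lra|].
  apply Rle_lt_trans with (Rabs C * enorm d (psub (G y) (G x))).
  - apply Rmult_le_compat_r; [lra | apply Rle_abs].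
  - apply Rle_lt_trans with (Rabs C * (eps / (Rabs C + 1))); [nra|].
    apply Rlt_le_trans with ((Rabs C + 1) * (eps / (Rabs C + 1))); [nra | right; field; lra].
Qed.

(** * Powers and the function [A] *)

Lemma rpow_ge0 r p : 0 <= rpow r p.
Proof. unfold rpow. destruct (Rlt_dec 0 r); [left; apply exp_pos | lra]. Qed.

Lemma rpow_pos r p : 0 < r -> rpow r p = Rpower r p.
Proof. intros. unfold rpow. destruct (Rlt_dec 0 r); [reflexivity | lra]. Qed.

Lemma rpow_npos r p : r <= 0 -> rpow r p = 0.
Proof. intros. unfold rpow. destruct (Rlt_dec 0 r); [lra | reflexivity]. Qed.

Lemma rpow_le_compat u v p : 0 <= u <= v -> 0 <= p -> rpow u p <= rpow v p.
Proof.
  intros Huv Hp. destruct (Req_dec u 0) as [->|Hu].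
  - rewrite rpow_npos by lra. apply rpow_ge0.
  - rewrite !rpow_pos by lra. apply Rle_Rpower_l; lra.
Qed.

Lemma rpow_plus_1 h p : rpow h (p + 1) = rpow h p * h.
Proof.
  destruct (Rlt_dec 0 h) as [Hh|Hh].
  - rewrite !rpow_pos by exact Hh. rewrite Rpower_plus, Rpower_1 by exact Hh. reflexivity.
  - rewrite !rpow_npos by lra. ring.
Qed.

Lemma rpow_le_Rabs h p : Rabs h <= 1 -> 1 <= p -> rpow h p <= Rabs h.
Proof.
  intros Hh Hp. destruct (Rlt_dec 0 h) as [Hpos|Hpos]; [|rewrite rpow_npos by lra; apply Rabs_pos].
  rewrite Rabs_pos_eq in * by lra.
  replace p with ((p - 1) + 1) by ring. rewrite rpow_plus_1, rpow_pos by exact Hpos.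
  assert (Hln : ln h <= 0) by (rewrite <- ln_1; apply ln_le; lra).
  assert (Rpower h (p - 1) <= 1).
  { unfold Rpower. apply Rle_trans with (exp 0); [|rewrite exp_0; lra].
    destruct (Req_dec ((p - 1) * ln h) 0) as [->|E]; [lra | left; apply exp_increasing; nra]. }
  pose proof (exp_pos ((p - 1) * ln h)). unfold Rpower in *. nra.
Qed.

Lemma sqrt_rpow w s : sqrt (rpow w s) = rpow w (s / 2).
Proof.
  destruct (Rlt_dec 0 w) as [Hw|Hw]; [|rewrite !rpow_npos by lra; apply sqrt_0].
  rewrite !rpow_pos by exact Hw. replace s with (s / 2 + s / 2) at 1 by field.
  rewrite Rpower_plus. apply sqrt_square. left; apply exp_pos.
Qed.

Lemma continuous_rpow p x : 1 <= p -> continuous (fun r => rpow r p) x.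
Proof.
  intros Hp. destruct (Rtotal_order x 0) as [Hx|[->|Hx]].
  - apply continuous_ext_loc with (fun _ => 0); [|apply continuous_const].
    apply locally_R. exists (mkposreal (- x) ltac:(lra)). intros y Hy. simpl in Hy.
    apply Rabs_lt_between in Hy. symmetry; apply rpow_npos; lra.
  - apply continuous_R. intros eps. apply locally_R.
    exists (mkposreal (Rmin 1 eps) (Rmin_pos 1 eps ltac:(lra) (cond_pos eps))).
    intros y Hy. simpl in Hy. pose proof (Rmin_l 1 eps). pose proof (Rmin_r 1 eps).
    rewrite Rminus_0_r in Hy. rewrite (rpow_npos 0) by lra. rewrite Rminus_0_r.
    rewrite Rabs_pos_eq by apply rpow_ge0.
    pose proof (rpow_le_Rabs y p ltac:(lra) Hp). lra.
  - apply continuous_ext_loc with (fun r => Rpower r p).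
    + apply locally_R. exists (mkposreal x Hx). intros y Hy. simpl in Hy.
      apply Rabs_lt_between in Hy. symmetry; apply rpow_pos; lra.
    + apply (ex_derive_continuous (V := R_NormedModule)). exists (p * Rpower x (p - 1)).
      apply is_derive_Reals, derivable_pt_lim_power, Hx.
Qed.

Lemma Afun_0 s : Afun s 0 = 0.
Proof. unfold Afun. rewrite rpow_npos by lra. unfold Rdiv. ring. Qed.

Lemma Afun_le_compat s a b : 0 <= s -> 0 <= a <= b -> Afun s a <= Afun s b.
Proof.
  intros Hs Hab. unfold Afun, Rdiv. apply Rmult_le_compat_r.
  - left; apply Rinv_0_lt_compat; lra.
  - apply rpow_le_compat; lra.
Qed.

Lemma is_derive_Afun s a : 2 <= s -> is_derive (Afun s) a (rpow a (s / 2)).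
Proof.
  intros Hs. destruct (Rtotal_order a 0) as [Ha|[->|Ha]].
  - rewrite rpow_npos by lra.
    apply (is_derive_ext_loc (fun _ => 0)); [|apply (is_derive_const (V := R_NormedModule))].
    apply locally_R. exists (mkposreal (- a) ltac:(lra)). intros y Hy. simpl in Hy.
    apply Rabs_lt_between in Hy. unfold Afun, Rdiv. rewrite rpow_npos by lra.
    rewrite Rmult_0_l. reflexivity.
  - (* A(h) / h = rpow h (s/2) / (1 + s/2) <= |h| for small h *)
    rewrite rpow_npos by lra. apply is_derive_Reals. intros eps Heps.
    exists (mkposreal (Rmin 1 eps) (Rmin_pos 1 eps ltac:(lra) Heps)).
    intros h Hh0 Hh. simpl in Hh. pose proof (Rmin_l 1 eps). pose proof (Rmin_r 1 eps).
    rewrite Rplus_0_l, Afun_0. unfold Afun.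
    replace (1 + s / 2) with (s / 2 + 1) by ring. rewrite rpow_plus_1.
    replace ((rpow h (s / 2) * h / (s / 2 + 1) - 0) / h - 0) with (rpow h (s / 2) / (s / 2 + 1))
      by (field; lra).
    pose proof (rpow_ge0 h (s / 2)). pose proof (rpow_le_Rabs h (s / 2) ltac:(lra) ltac:(lra)).
    rewrite Rabs_pos_eq by (apply Rdiv_le_0_compat; lra).
    apply Rle_lt_trans with (rpow h (s / 2)); [|lra].
    apply Rmult_le_reg_r with (s / 2 + 1); [lra|].
    unfold Rdiv. rewrite Rmult_assoc, Rinv_l by lra. nra.
  - apply (is_derive_ext_loc (fun x => / (1 + s / 2) * Rpower x (1 + s / 2))).
    + apply locally_R. exists (mkposreal a Ha). intros y Hy. simpl in Hy.
      apply Rabs_lt_between in Hy. unfold Afun, Rdiv. rewrite rpow_pos by lra. apply Rmult_comm.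
    + replace (rpow a (s / 2)) with (/ (1 + s / 2) * ((1 + s / 2) * Rpower a (1 + s / 2 - 1))).
      * apply is_derive_scal, is_derive_Reals, derivable_pt_lim_power, Ha.
      * rewrite rpow_pos by exact Ha. replace (1 + s / 2 - 1) with (s / 2) by ring. field. lra.
Qed.

Lemma Rmin_rpow a b p : 0 <= a -> 0 <= b -> 0 <= p ->
  Rmin (rpow a p) (rpow b p) = rpow (Rmin a b) p.
Proof.
  intros Ha Hb Hp. unfold Rmin at 2. destruct (Rle_dec a b).
  - apply Rmin_left, rpow_le_compat; lra.
  - apply Rmin_right, rpow_le_compat; lra.
Qed.

(** * The two wells *)

Definition well_dist d L (y : pt) : R :=
  Rmin (enorm d (padd y (xw L))) (enorm d (psub y (xw L))).

Lemma well_dist_lipschitz d L y z : Rabs (well_dist d L z - well_dist d L y) <= enorm d (psub z y).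
Proof.
  unfold well_dist. apply Rmin_lipschitz; [|apply Rabs_enorm_psub_le].
  assert (E : forall v, enorm d (padd v (xw L)) = enorm d (psub v (popp (xw L))))
    by (intros; apply enorm_ext; intros; unfold padd, psub, popp; ring).
  rewrite !E.
  apply Rabs_enorm_psub_le.
Qed.

Lemma sqrt_VDW d s L y : 0 <= s -> sqrt (VDW d s L y) = rpow (well_dist d L y) (s / 2).
Proof.
  intros Hs. unfold VDW, well_dist.
  rewrite Rmin_rpow by (apply enorm_ge0 || lra). apply sqrt_rpow.
Qed.

Lemma sumsq_psub_well d L sg w y : (1 <= d)%nat -> sg * sg = 1 ->
  (forall i, w i = sg * xw L i) ->
  sumsq d (psub y w) = sumsq d y - sg * L * y 0%nat + L ^ 2 / 4.
Proof.
  intros Hd Hsg Hw. induction d as [|d IH]; [lia|].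
  destruct d as [|d].
  - cbn [sumsq]. unfold psub. rewrite Hw. unfold xw. simpl. nra.
  - change (sumsq (S (S d)) ?v) with (sumsq (S d) v + v (S d) ^ 2).
    rewrite IH by lia. unfold psub. rewrite Hw. unfold xw. simpl. ring.
Qed.

Lemma well_dist_near d L sg w y : (1 <= d)%nat -> 0 <= L -> (sg = 1 \/ sg = -1) ->
  (forall i, w i = sg * xw L i) -> 0 <= sg * y 0%nat ->
  well_dist d L y = enorm d (psub y w).
Proof.
  intros Hd HL Hsg Hw Hy.
  assert (Hsg2 : sg * sg = 1) by (destruct Hsg as [-> | ->]; ring).
  set (w' := fun i => - sg * xw L i).
  assert (Hle : enorm d (psub y w) <= enorm d (psub y w')).
  { apply sqrt_le_1_alt.
    rewrite (sumsq_psub_well d L sg w y), (sumsq_psub_well d L (- sg) w' y) by (auto || nra).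
    nra. }
  unfold well_dist.
  destruct Hsg as [-> | ->].
  - rewrite (enorm_ext d (padd y (xw L)) (psub y w')), (enorm_ext d (psub y (xw L)) (psub y w))
      by (intros; unfold padd, psub, w'; rewrite ?Hw; ring).
    apply Rmin_right, Hle.
  - rewrite (enorm_ext d (padd y (xw L)) (psub y w)), (enorm_ext d (psub y (xw L)) (psub y w'))
      by (intros; unfold padd, psub, w'; rewrite ?Hw; ring).
    apply Rmin_left, Hle.
Qed.

(** * Agmon-Lipschitz functions bound the Agmon distance *)

Definition agmon_lipschitz_at d s L (Phi : pt -> R) (y : pt) : Prop :=
  forall eps, 0 < eps -> exists del, 0 < del /\ forall z, enorm d (psub z y) < del ->
    Rabs (Phi z - Phi y) <= (sqrt (VDW d s L y) + eps) * enorm d (psub z y).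

Definition agmon_lipschitz d s L (Phi : pt -> R) : Prop :=
  forall y, agmon_lipschitz_at d s L Phi y.

Lemma agmon_lipschitz_at_Afun d s L (ell : pt -> R) y : 2 <= s ->
  (forall y z, Rabs (ell z - ell y) <= enorm d (psub z y)) ->
  rpow (ell y) (s / 2) <= sqrt (VDW d s L y) ->
  agmon_lipschitz_at d s L (fun z => Afun s (ell z)) y.
Proof.
  intros Hs Hell HV eps Heps.
  destruct (proj1 (locally_R _ _)
    (is_derive_approx _ _ _ (is_derive_Afun s (ell y) Hs) (mkposreal eps Heps))) as [del Hdel].
  exists del. split; [apply cond_pos|]. intros z Hz.
  pose proof (Hell y z) as Hz'. pose proof (rpow_ge0 (ell y) (s / 2)).
  specialize (Hdel (ell z) ltac:(lra)). simpl in Hdel.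
  set (l := rpow (ell y) (s / 2)) in *. set (h := ell z - ell y) in *.
  apply Rle_trans with ((l + eps) * Rabs h).
  - replace (Afun s (ell z) - Afun s (ell y)) with (Afun s (ell z) - Afun s (ell y) - h * l + h * l)
      by ring.
    eapply Rle_trans; [apply Rabs_triang|]. rewrite Rabs_mult, (Rabs_pos_eq l) by lra. nra.
  - apply Rmult_le_compat; lra || apply Rabs_pos.
Qed.

Lemma agmon_lipschitz_at_comp d s L (psi : R -> R) Phi y :
  (forall a b, Rabs (psi a - psi b) <= Rabs (a - b)) ->
  agmon_lipschitz_at d s L Phi y -> agmon_lipschitz_at d s L (fun z => psi (Phi z)) y.
Proof.
  intros Hpsi HPhi eps Heps. destruct (HPhi eps Heps) as [del [Hdel HP]].
  exists del. split; [exact Hdel|]. intros z Hz. eapply Rle_trans; [apply Hpsi | apply HP, Hz].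
Qed.

Lemma agmon_lipschitz_at_locally_const d s L Phi y r : 0 < r ->
  (forall z, enorm d (psub z y) < r -> Phi z = Phi y) -> agmon_lipschitz_at d s L Phi y.
Proof.
  intros Hr Hconst eps Heps. exists r. split; [exact Hr|]. intros z Hz.
  rewrite Hconst, Rminus_diag, Rabs_R0 by exact Hz.
  apply Rmult_le_pos; [pose proof (sqrt_pos (VDW d s L y)); lra | apply enorm_ge0].
Qed.

Lemma agmon_lipschitz_at_plus d s L Phi1 Phi2 y r : 0 < r ->
  agmon_lipschitz_at d s L Phi1 y -> agmon_lipschitz_at d s L Phi2 y ->
  (forall z, enorm d (psub z y) < r -> Phi1 z = Phi1 y \/ Phi2 z = Phi2 y) ->
  agmon_lipschitz_at d s L (fun z => Phi1 z + Phi2 z) y.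
Proof.
  intros Hr H1 H2 Hside eps Heps.
  destruct (H1 eps Heps) as [del1 [Hdel1 HP1]]. destruct (H2 eps Heps) as [del2 [Hdel2 HP2]].
  exists (Rmin r (Rmin del1 del2)).
  split; [apply Rmin_pos; [|apply Rmin_pos]; assumption|]. intros z Hz.
  pose proof (Rmin_l r (Rmin del1 del2)). pose proof (Rmin_r r (Rmin del1 del2)).
  pose proof (Rmin_l del1 del2). pose proof (Rmin_r del1 del2).
  destruct (Hside z ltac:(lra)) as [E|E]; rewrite E.
  - replace (Phi1 y + Phi2 z - (Phi1 y + Phi2 y)) with (Phi2 z - Phi2 y) by ring. apply HP2; lra.
  - replace (Phi1 z + Phi2 y - (Phi1 y + Phi2 y)) with (Phi1 z - Phi1 y) by ring. apply HP1; lra.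
Qed.

Lemma agmon_lipschitz_glue d s L (h Phi1 Phi2 : pt -> R) :
  (forall y z, Rabs (h z - h y) <= enorm d (psub z y)) ->
  (forall y, h y <= 0 -> agmon_lipschitz_at d s L Phi1 y) ->
  (forall y, 0 <= h y -> agmon_lipschitz_at d s L Phi2 y) ->
  (forall y z, 0 <= h y -> 0 <= h z -> Phi1 z = Phi1 y) ->
  (forall y z, h y <= 0 -> h z <= 0 -> Phi2 z = Phi2 y) ->
  agmon_lipschitz d s L (fun z => Phi1 z + Phi2 z).
Proof.
  intros Hh H1 H2 C1 C2 y.
  destruct (Rtotal_order (h y) 0) as [Hy|[Hy|Hy]].
  - assert (Hneg : forall z, enorm d (psub z y) < - h y -> h z <= 0)
      by (intros z Hz; pose proof (Hh y z) as Hyz; apply Rabs_le_between in Hyz; lra).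
    apply (agmon_lipschitz_at_plus _ _ _ _ _ _ (- h y)); [lra | apply H1; lra | |].
    + apply (agmon_lipschitz_at_locally_const _ _ _ _ _ (- h y)); [lra|].
      intros z Hz. apply C2; [lra | apply Hneg, Hz].
    + intros z Hz. right. apply C2; [lra | apply Hneg, Hz].
  - apply (agmon_lipschitz_at_plus _ _ _ _ _ _ 1); [lra | apply H1; lra | apply H2; lra |].
    intros z _. destruct (Rle_dec 0 (h z)); [left; apply C1 | right; apply C2]; lra.
  - assert (Hpos : forall z, enorm d (psub z y) < h y -> 0 <= h z)
      by (intros z Hz; pose proof (Hh y z) as Hyz; apply Rabs_le_between in Hyz; lra).
    apply (agmon_lipschitz_at_plus _ _ _ _ _ _ (h y)); [lra | | apply H2; lra |].
    + apply (agmon_lipschitz_at_locally_const _ _ _ _ _ (h y)); [lra|].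
      intros z Hz. apply C1; [lra | apply Hpos, Hz].
    + intros z Hz. left. apply C1; [lra | apply Hpos, Hz].
Qed.

Lemma agmon_lipschitz_chain_bound d s L Phi (G : R -> pt) (Dx : pt) x e : 0 < e ->
  agmon_lipschitz_at d s L Phi (G x) ->
  (forall i, (i < d)%nat -> is_derive (fun u => G u i) x (Dx i)) ->
  locally x (fun y : R => Rabs (Phi (G y) - Phi (G x))
                           <= (sqrt (VDW d s L (G x)) + e) * ((enorm d Dx + e) * Rabs (y - x))).
Proof.
  intros He HPhi HG. destruct (HPhi e He) as [del [Hdel HP]].
  pose proof (enorm_ge0 d Dx). pose proof (sqrt_pos (VDW d s L (G x))).
  set (N := enorm d Dx + e) in *. assert (HN : 0 < N) by (unfold N; lra).
  assert (Hr : 0 < del / N) by (apply Rdiv_lt_0_compat; assumption).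
  apply (filter_imp (fun y =>
           enorm d (psub (G y) (G x)) <= N * Rabs (y - x) /\ Rabs (y - x) < del / N)).
  - intros y [Hinc Hy]. pose proof (enorm_ge0 d (psub (G y) (G x))).
    assert (N * Rabs (y - x) < del)
      by (apply Rlt_le_trans with (N * (del / N)); [nra | right; field; lra]).
    eapply Rle_trans; [apply HP; lra|]. apply Rmult_le_compat_l; lra.
  - apply filter_and; [exact (enorm_increment_le d G Dx x e He HG)|].
    apply locally_R. exists (mkposreal _ Hr). intros y Hy. exact Hy.
Qed.

Lemma agmon_integrand_right_estimate d s L Phi (G : R -> pt) (Dx : pt) (F : R -> R) x :
  agmon_lipschitz_at d s L Phi (G x) ->
  (forall i, (i < d)%nat -> is_derive (fun u => G u i) x (Dx i)) ->
  is_derive F x (sqrt (VDW d s L (G x)) * enorm d Dx) ->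
  forall eps, 0 < eps -> exists del, 0 < del /\
    forall y, x < y < x + del -> Phi (G y) - Phi (G x) <= F y - F x + eps * (y - x).
Proof.
  intros HPhi HG HF eps Heps.
  pose proof (sqrt_pos (VDW d s L (G x))). pose proof (enorm_ge0 d Dx).
  set (S := sqrt (VDW d s L (G x))) in *. set (N := enorm d Dx) in *.
  pose proof (Rmin_l 1 (eps / (2 * (S + N + 1)))). pose proof (Rmin_r 1 (eps / (2 * (S + N + 1)))).
  set (e := Rmin 1 (eps / (2 * (S + N + 1)))) in *.
  assert (He : 0 < e) by (apply Rmin_pos; [lra | apply Rdiv_lt_0_compat; lra]).
  assert (Hsmall : (S + e) * (N + e) <= S * N + eps / 2).
  { assert (e * (S + N + 1) <= eps / 2).
    { apply Rle_trans with (eps / (2 * (S + N + 1)) * (S + N + 1)); [apply Rmult_le_compat_r; lra|].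
      right. field. lra. }
    nra. }
  destruct (proj1 (locally_R _ _) (filter_and _ _
    (agmon_lipschitz_chain_bound d s L Phi G Dx x e He HPhi HG)
    (is_derive_approx F x _ HF (mkposreal (eps / 2) ltac:(lra))))) as [del Hdel].
  exists del. split; [apply cond_pos|]. intros y Hy.
  destruct (Hdel y ltac:(rewrite Rabs_pos_eq; lra)) as [HP HFy]. simpl in HFy.
  fold S N in HP. rewrite (Rabs_pos_eq (y - x)) in HP, HFy by lra.
  apply Rabs_le_between in HP. apply Rabs_le_between in HFy.
  assert ((S + e) * ((N + e) * (y - x)) <= (S * N + eps / 2) * (y - x)).
  { rewrite <- Rmult_assoc. apply Rmult_le_compat_r; lra. }
  nra.
Qed.

Lemma continuous_agmon_integrand d s L (G E : R -> pt) x : 2 <= s ->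
  (forall i, (i < d)%nat -> continuous (fun u => G u i) x) ->
  (forall i, (i < d)%nat -> continuous (fun u => E u i) x) ->
  continuous (fun u => sqrt (VDW d s L (G u)) * enorm d (E u)) x.
Proof.
  intros Hs HG HE.
  apply (continuous_mult (fun u => sqrt (VDW d s L (G u))) (fun u => enorm d (E u))).
  - apply (continuous_ext (fun u => rpow (well_dist d L (G u)) (s / 2)));
      [intros u; rewrite sqrt_VDW by lra; reflexivity|].
    apply (continuous_comp (fun u => well_dist d L (G u)) (fun r => rpow r (s / 2)));
      [|apply continuous_rpow; lra].
    apply (continuous_comp_pt d (well_dist d L) G x 1 1); [lra | exact HG|].
    intros z _. rewrite Rmult_1_l. apply well_dist_lipschitz.
  - apply (continuous_comp_pt d (enorm d) E x 1 1); [lra | exact HE|].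
    intros z _. rewrite Rmult_1_l. apply Rabs_enorm_sub_le.
Qed.

Lemma agmon_lipschitz_piece d s L Phi a b (g D : R -> pt) : 2 <= s -> a < b ->
  agmon_lipschitz d s L Phi ->
  (forall i, (i < d)%nat -> cont_on a b (fun u => g u i)) ->
  (forall i, (i < d)%nat -> cont_on a b (fun u => D u i)) ->
  (forall i u, (i < d)%nat -> a < u < b -> is_derive (fun v => g v i) u (D u i)) ->
  Phi (g b) - Phi (g a) <= RInt (fun u => sqrt (VDW d s L (g u)) * enorm d (D u)) a b.
Proof.
  intros Hs Hab HPhi Hg HD Hder.
  (* Extended by constants outside [a, b], the integrand becomes continuous on the whole line,
     as [is_derive_RInt] requires. *)
  set (G := fun u => g (clamp a b u)). set (E := fun u => D (clamp a b u)).
  assert (HG : forall x i, (i < d)%nat -> continuous (fun u => G u i) x)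
    by (intros x i Hi; apply (continuous_clamp_comp a b (fun v => g v i)); [lra | auto]).
  assert (HE : forall x i, (i < d)%nat -> continuous (fun u => E u i) x)
    by (intros x i Hi; apply (continuous_clamp_comp a b (fun v => D v i)); [lra | auto]).
  set (f := fun u => sqrt (VDW d s L (G u)) * enorm d (E u)).
  assert (Hf : forall x, continuous f x)
    by (intros x; apply continuous_agmon_integrand; [exact Hs | apply HG | apply HE]).
  set (F := fun w => RInt f a w).
  assert (HF : forall x, is_derive F x (f x)).
  { intros x. apply (is_derive_RInt f F a x); [|apply Hf].
    apply filter_forall. intros y. apply (RInt_correct (V := R_CompleteNormedModule)).
    apply ex_RInt_continuous. intros; apply Hf. }
  assert (Hmain : Phi (G b) - Phi (G a) <= F b - F a).
  { apply (dini_comparison (fun u => Phi (G u)) F); [lra| | |].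
    - intros x _. destruct (HPhi (G x) 1 Rlt_0_1) as [del [Hdel HPx]].
      exact (continuous_comp_pt d Phi G x _ del Hdel (HG x) HPx).
    - intros x _. apply (ex_derive_continuous (V := R_NormedModule)). eexists. apply HF.
    - intros x Hx.
      apply (agmon_integrand_right_estimate d s L Phi G (E x) F x (HPhi (G x))); [|apply HF].
      intros i Hi. unfold E. rewrite clamp_id by lra.
      apply (is_derive_ext_loc (fun v => g v i)); [|apply Hder; assumption].
      apply locally_R. exists (mkposreal (Rmin (x - a) (b - x)) ltac:(apply Rmin_pos; lra)).
      intros y Hy. simpl in Hy. apply Rabs_lt_between in Hy.
      pose proof (Rmin_l (x - a) (b - x)). pose proof (Rmin_r (x - a) (b - x)).
      unfold G. rewrite clamp_id by lra. reflexivity. }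
  unfold G, F in Hmain. rewrite !clamp_id, RInt_point in Hmain by lra.
  eapply Rle_trans; [exact Hmain|]. right.
  rewrite Rminus_0_r. apply RInt_ext. intros u Hu.
  rewrite Rmin_left, Rmax_right in Hu by lra. unfold f, G, E. rewrite clamp_id by lra. reflexivity.
Qed.

Lemma psum_telescope n (h : nat -> R) : psum n (fun k => h (S k) - h k) = h n - h O.
Proof. induction n as [|n IH]; simpl; [ring|]. rewrite IH. ring. Qed.

Lemma psum_le n f g : (forall k, (k < n)%nat -> f k <= g k) -> psum n f <= psum n g.
Proof.
  induction n as [|n IH]; intros H; simpl; [lra|].
  apply Rplus_le_compat; [apply IH; intros; apply H | apply H]; lia.
Qed.

Lemma partition_in_unit n (t : nat -> R) : t O = 0 -> t n = 1 ->
  (forall k, (k < n)%nat -> t k < t (S k)) -> forall k, (k <= n)%nat -> 0 <= t k <= 1.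
Proof.
  intros H0 Hn Hinc.
  assert (Hmono : forall j k, (j <= k <= n)%nat -> t j <= t k).
  { intros j k Hjk. induction k as [|k IH]; [replace j with O by lia; lra|].
    destruct (Nat.eq_dec j (S k)) as [->|]; [lra|].
    specialize (IH ltac:(lia)). specialize (Hinc k ltac:(lia)). lra. }
  intros k Hk. rewrite <- H0, <- Hn. split; apply Hmono; lia.
Qed.

Lemma agmon_lipschitz_ext d s L Phi z w : agmon_lipschitz d s L Phi ->
  (forall i, (i < d)%nat -> z i = w i) -> Phi z = Phi w.
Proof.
  intros HPhi Hzw. destruct (HPhi w 1 Rlt_0_1) as [del [Hdel HP]].
  assert (E : enorm d (psub z w) = 0)
    by (apply enorm_zero; intros i Hi; unfold psub; rewrite Hzw by exact Hi; ring).
  specialize (HP z ltac:(lra)). rewrite E, Rmult_0_r in HP.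
  apply Rabs_le_between in HP. lra.
Qed.

Lemma agmon_lipschitz_path_bound d s L Phi x y g Dg t n : 2 <= s ->
  agmon_lipschitz d s L Phi -> pw_C1_path d x y g Dg t n ->
  Phi y - Phi x <= agmon_length d s L g Dg t n.
Proof.
  intros Hs HPhi [Hend [Ht0 [Htn [Hinc [Hgc Hpiece]]]]].
  (* A path only pins down the first [d] coordinates of its endpoints. *)
  rewrite (agmon_lipschitz_ext d s L Phi y (g 1) HPhi), (agmon_lipschitz_ext d s L Phi x (g 0) HPhi)
    by (intros; symmetry; apply Hend; assumption).
  rewrite <- Htn, <- Ht0, <- (psum_telescope n (fun k => Phi (g (t k)))).
  apply psum_le. intros k Hk.
  pose proof (partition_in_unit n t Ht0 Htn Hinc k ltac:(lia)).
  pose proof (partition_in_unit n t Ht0 Htn Hinc (S k) ltac:(lia)).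
  apply agmon_lipschitz_piece; [exact Hs | apply Hinc, Hk | exact HPhi | | |].
  - intros i Hi. apply (cont_on_sub 0 1); [lra | lra | apply Hgc, Hi].
  - intros i Hi. apply (Hpiece k i Hk Hi).
  - intros i u Hi Hu. apply (Hpiece k i Hk Hi), Hu.
Qed.

Lemma agmon_lipschitz_le_dDW d s L Phi x y : 2 <= s -> agmon_lipschitz d s L Phi ->
  Rbar_le (Phi y - Phi x) (dDW d s L x y).
Proof.
  intros Hs HPhi. unfold dDW.
  apply (proj2 (Glb_Rbar_correct _)). intros l [g [Dg [t [n [Hpath ->]]]]].
  apply (agmon_lipschitz_path_bound d s L Phi x y g Dg t n Hs HPhi Hpath).
Qed.

(** * Two potentials *)

Lemma agmon_lipschitz_well_potential d s L : 2 <= s ->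
  agmon_lipschitz d s L (fun y => - Afun s (well_dist d L y)).
Proof.
  intros Hs y. apply (agmon_lipschitz_at_comp d s L Ropp (fun z => Afun s (well_dist d L z))).
  - intros a b. replace (- a - - b) with (- (a - b)) by ring. rewrite Rabs_Ropp. lra.
  - apply agmon_lipschitz_at_Afun; [exact Hs | apply well_dist_lipschitz |].
    rewrite sqrt_VDW by lra. lra.
Qed.

Lemma dDW_ge_near_well d s L sg w x : (1 <= d)%nat -> 2 <= s -> 0 < L -> (sg = 1 \/ sg = -1) ->
  (forall i, w i = sg * xw L i) -> 0 <= sg * x 0%nat ->
  Rbar_le (Afun s (enorm d (psub x w))) (dDW d s L x w).
Proof.
  intros Hd Hs HL Hsg Hw Hx.
  assert (Hw0 : 0 <= sg * w 0%nat)
    by (rewrite Hw; unfold xw; simpl; destruct Hsg as [-> | ->]; lra).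
  replace (Afun s (enorm d (psub x w)))
    with (- Afun s (well_dist d L w) - - Afun s (well_dist d L x)).
  - apply (agmon_lipschitz_le_dDW d s L (fun y => - Afun s (well_dist d L y)));
      [exact Hs | apply agmon_lipschitz_well_potential, Hs].
  - rewrite (well_dist_near d L sg w w), (well_dist_near d L sg w x) by (assumption || lra).
    rewrite enorm_zero, Afun_0 by (intros; unfold psub; ring). ring.
Qed.

Section TwoWellPotential.

Variables (d : nat) (s L sg : R).
Hypotheses (Hd : (1 <= d)%nat) (Hs : 2 <= s) (HL : 0 < L) (Hsg : sg = 1 \/ sg = -1).

Let well : pt := fun i => sg * xw L i.
Let far_well : pt := fun i => - sg * xw L i.

Definition two_well_potential (y : pt) : R :=
  Afun s (Rmin (Rabs (sg * y 0%nat + L / 2)) (L / 2))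
  + Rmax 0 (Afun s (L / 2) - Afun s (enorm d (psub y well))).

Lemma Rabs_sg_mul a : Rabs (sg * a) = Rabs a.
Proof. destruct Hsg as [-> | ->]; [|rewrite <- Rabs_Ropp]; f_equal; ring. Qed.

Lemma sg_coord_lipschitz y z : Rabs (sg * z 0%nat - sg * y 0%nat) <= enorm d (psub z y).
Proof.
  rewrite <- Rmult_minus_distr_l, Rabs_sg_mul.
  apply (Rabs_le_enorm d (psub z y) 0%nat). lia.
Qed.

Lemma enorm_psub_well_ge y : sg * y 0%nat <= 0 -> L / 2 <= enorm d (psub y well).
Proof.
  intros Hy. eapply Rle_trans; [|apply (Rabs_le_enorm d _ 0%nat); lia].
  unfold psub, well, xw. simpl. rewrite <- Rabs_sg_mul.
  destruct Hsg as [-> | ->]; rewrite Rabs_left1; lra.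
Qed.

Lemma two_well_ramp_le_far_dist y : sg * y 0%nat <= 0 ->
  Rmin (Rabs (sg * y 0%nat + L / 2)) (L / 2) <= enorm d (psub y far_well).
Proof.
  intros Hy. eapply Rle_trans; [apply Rmin_l|].
  eapply Rle_trans; [|apply (Rabs_le_enorm d _ 0%nat); lia].
  unfold psub, far_well, xw. simpl. rewrite <- Rabs_sg_mul.
  right. f_equal. destruct Hsg as [-> | ->]; ring.
Qed.

Lemma two_well_ramp_near y : 0 <= sg * y 0%nat ->
  Rmin (Rabs (sg * y 0%nat + L / 2)) (L / 2) = L / 2.
Proof. intros Hy. apply Rmin_right. rewrite Rabs_pos_eq; lra. Qed.

Lemma two_well_bump_far y : sg * y 0%nat <= 0 ->
  Rmax 0 (Afun s (L / 2) - Afun s (enorm d (psub y well))) = 0.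
Proof.
  intros Hy. apply Rmax_left.
  pose proof (enorm_psub_well_ge y Hy).
  pose proof (Afun_le_compat s (L / 2) (enorm d (psub y well)) ltac:(lra) ltac:(lra)). lra.
Qed.

Lemma agmon_lipschitz_two_well_potential : agmon_lipschitz d s L two_well_potential.
Proof.
  assert (Hsg' : - sg = 1 \/ - sg = -1) by (destruct Hsg as [-> | ->]; [right | left]; ring).
  apply (agmon_lipschitz_glue d s L (fun y => sg * y 0%nat)); [exact sg_coord_lipschitz | | | |].
  - intros y Hy. apply agmon_lipschitz_at_Afun; [exact Hs| |].
    + intros y' z. eapply Rle_trans; [|apply sg_coord_lipschitz].
      apply Rmin_lipschitz; [|rewrite Rminus_diag, Rabs_R0; apply Rabs_pos].
      eapply Rle_trans; [apply Rabs_triang_inv2|]. right. f_equal. ring.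
    + rewrite sqrt_VDW by lra. apply rpow_le_compat; [|lra]. split.
      * apply Rmin_glb; [apply Rabs_pos | lra].
      * rewrite (well_dist_near d L (- sg) far_well y) by (reflexivity || lra || assumption).
        apply two_well_ramp_le_far_dist, Hy.
  - intros y Hy.
    apply (agmon_lipschitz_at_comp d s L (fun r => Rmax 0 (Afun s (L / 2) - r))
             (fun z => Afun s (enorm d (psub z well)))).
    + intros a b. apply Rabs_le_between.
      pose proof (proj1 (Rabs_le_between (a - b) _) (Rle_refl _)).
      unfold Rmax. destruct (Rle_dec 0 _); destruct (Rle_dec 0 _); lra.
    + apply agmon_lipschitz_at_Afun; [exact Hs | intros; apply Rabs_enorm_psub_le |].
      rewrite sqrt_VDW, (well_dist_near d L sg well y) by (reflexivity || lra || assumption). lra.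
  - intros y z Hy Hz. rewrite !two_well_ramp_near by assumption. reflexivity.
  - intros y z Hy Hz. rewrite !two_well_bump_far by assumption. reflexivity.
Qed.

End TwoWellPotential.

Lemma dDW_ge_far_well d s L sg w x : (1 <= d)%nat -> 2 <= s -> 0 < L -> (sg = 1 \/ sg = -1) ->
  (forall i, w i = sg * xw L i) -> - L / 2 <= sg * x 0%nat <= 0 ->
  Rbar_le (2 * Afun s (L / 2) - Afun s (Rabs (L / 2 + sg * x 0%nat))) (dDW d s L x w).
Proof.
  intros Hd Hs HL Hsg Hw Hx.
  assert (Hw0 : sg * w 0%nat = L / 2)
    by (rewrite Hw; unfold xw; simpl; destruct Hsg as [-> | ->]; field).
  replace (2 * Afun s (L / 2) - Afun s (Rabs (L / 2 + sg * x 0%nat)))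
    with (two_well_potential d s L sg w - two_well_potential d s L sg x).
  - apply agmon_lipschitz_le_dDW; [exact Hs | apply agmon_lipschitz_two_well_potential; assumption].
  - unfold two_well_potential.
    rewrite (two_well_ramp_near L sg HL w), (two_well_bump_far d s L sg Hd Hs HL Hsg x) by lra.
    rewrite enorm_zero, Afun_0 by (intros; unfold psub; rewrite Hw; ring).
    rewrite Rmin_left by (rewrite Rabs_pos_eq; lra).
    pose proof (Afun_le_compat s 0 (L / 2) ltac:(lra) ltac:(lra)). rewrite Afun_0 in *.
    rewrite Rmax_right, (Rplus_comm (sg * x 0%nat)) by lra. ring.
Qed.

Lemma enorm_e1_psub_xw d L x1 : (1 <= d)%nat -> enorm d (psub (e1 x1) (xw L)) = Rabs (x1 - L / 2).
Proof.
  intros Hd. rewrite enorm_first_coord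
    by (assumption || (intros [|i] Hi; [lia | unfold psub, e1, xw; simpl; ring])).
  reflexivity.
Qed.

Lemma enorm_e1_padd_xw d L x1 : (1 <= d)%nat -> enorm d (padd (e1 x1) (xw L)) = Rabs (x1 + L / 2).
Proof.
  intros Hd. rewrite enorm_first_coord
    by (assumption || (intros [|i] Hi; [lia | unfold padd, e1, xw; simpl; ring])).
  reflexivity.
Qed.

Theorem lemma5p1 (d : nat) (s L c : R)
  (hd : (1 <= d)%nat) (hs : 2 <= s) (hL : 0 < L) (hc : 0 < c) :
  (* (i) *)
  (forall x : pt, 0 <= x 0%nat ->
     Rbar_le (Finite (Afun s (enorm d (psub x (xw L))))) (dDW d s L x (xw L))) /\
  (forall x : pt, x 0%nat <= 0 ->
     Rbar_le (Finite (Afun s (enorm d (padd x (xw L))))) (dDW d s L x (popp (xw L)))) /\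
  (* (ii) *)
  (forall x1 : R, 0 <= x1 ->
     Rbar_le (Finite (Afun s (Rabs (x1 - L / 2)))) (dDW d s L (e1 x1) (xw L))) /\
  (forall x1 : R, - L / 2 + c <= x1 <= 0 ->
     Rbar_le (Finite (2 * Afun s (L / 2) - Afun s (Rabs (L / 2 + x1))))
             (dDW d s L (e1 x1) (xw L))) /\
  (forall x1 : R, x1 <= 0 ->
     Rbar_le (Finite (Afun s (Rabs (x1 + L / 2)))) (dDW d s L (e1 x1) (popp (xw L)))) /\
  (forall x1 : R, 0 <= x1 <= L / 2 - c ->
     Rbar_le (Finite (2 * Afun s (L / 2) - Afun s (Rabs (L / 2 - x1))))
             (dDW d s L (e1 x1) (popp (xw L)))) /\
  (* (iii) *)
  (forall x : pt, - L / 2 + c <= x 0%nat <= 0 ->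
     Rbar_le (Finite (2 * Afun s (L / 2) - Afun s (Rabs (L / 2 + x 0%nat))))
             (dDW d s L x (xw L))) /\
  (forall x : pt, 0 <= x 0%nat <= L / 2 - c ->
     Rbar_le (Finite (2 * Afun s (L / 2) - Afun s (Rabs (L / 2 - x 0%nat))))
             (dDW d s L x (popp (xw L)))).
Proof.
  assert (Hp : forall i, xw L i = 1 * xw L i) by (intros; ring).
  assert (Hm : forall i, popp (xw L) i = -1 * xw L i) by (intros; unfold popp; ring).
  assert (near_p : forall x : pt, 0 <= x 0%nat ->
            Rbar_le (Afun s (enorm d (psub x (xw L)))) (dDW d s L x (xw L)))
    by (intros x Hx; apply (dDW_ge_near_well d s L 1); auto; lra).
  assert (near_m : forall x : pt, x 0%nat <= 0 ->
            Rbar_le (Afun s (enorm d (padd x (xw L)))) (dDW d s L x (popp (xw L)))).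
  { intros x Hx.
    rewrite (enorm_ext d _ (psub x (popp (xw L)))) by (intros; unfold padd, psub, popp; ring).
    apply (dDW_ge_near_well d s L (-1)); auto; lra. }
  assert (far_p : forall x : pt, - L / 2 <= x 0%nat <= 0 ->
            Rbar_le (2 * Afun s (L / 2) - Afun s (Rabs (L / 2 + x 0%nat))) (dDW d s L x (xw L))).
  { intros x Hx. rewrite <- (Rmult_1_l (x 0%nat)) at 1.
    apply (dDW_ge_far_well d s L 1); auto; lra. }
  assert (far_m : forall x : pt, 0 <= x 0%nat <= L / 2 ->
            Rbar_le (2 * Afun s (L / 2) - Afun s (Rabs (L / 2 - x 0%nat)))
                    (dDW d s L x (popp (xw L)))).
  { intros x Hx. replace (L / 2 - x 0%nat) with (L / 2 + -1 * x 0%nat) by ring.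
    apply (dDW_ge_far_well d s L (-1)); auto; lra. }
  split; [exact near_p|]. split; [exact near_m|].
  split; [intros x1 Hx1; rewrite <- (enorm_e1_psub_xw d L x1 hd); exact (near_p (e1 x1) Hx1)|].
  split; [intros x1 Hx1; apply (far_p (e1 x1)); unfold e1; simpl; lra|].
  split; [intros x1 Hx1; rewrite <- (enorm_e1_padd_xw d L x1 hd); exact (near_m (e1 x1) Hx1)|].
  split; [intros x1 Hx1; apply (far_m (e1 x1)); unfold e1; simpl; lra|].
  split; intros x Hx; [apply far_p | apply far_m]; lra.
Qed.
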